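(* Let $(s,\pi)$ be a plane permutation on $[n]$ with $s=(s_0s_1\cdots s_{n-1})$ and diagonal $D=s\circ\pi^{-1}$, let $h=(i,j,k,l)$ with $i\le j<k\le l$ and $\{i,j,k,l\}\subset[n-1]$, and let $(s^h,\pi^h)=\chi_h\circ(s,\pi)$. Then $\pi^h(s_r)=\pi(s_r)$ for every $r\in\{0,1,\ldots,n-1\}\setminus\{i-1,j,k-1,l\}$. Moreover, if $j+1<k$ then $$\pi^h(s_{i-1})=\pi(s_{k-1}),\quad \pi^h(s_j)=\pi(s_l),\quad \pi^h(s_{k-1})=\pi(s_{i-1}),\quad \pi^h(s_l)=\pi(s_j),$$ and if $j=k-1$ then $$\pi^h(s_{i-1})=\pi(s_j),\quad \pi^h(s_j)=\pi(s_l),\quad \pi^h(s_l)=\pi(s_{i-1}).$$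
   Context: Permutations of $[n]=\{1,\dots,n\}$ are multiplied as composition of maps, $(\sigma\tau)(x)=\sigma(\tau(x))$. A plane permutation on $[n]$ is a pair $(s,\pi)$ where $s=(s_0s_1\cdots s_{n-1})$ is an $n$-cycle on $[n]$, written with a fixed starting element $s_0$, and $\pi$ is an arbitrary permutation of $[n]$; its diagonal is $D=s\circ\pi^{-1}$. For $h=(i,j,k,l)$ with $i\le j<k\le l$ and $\{i,j,k,l\}\subset[n-1]$, let $s^h$ be the $n$-cycle $(s_0,\dots,s_{i-1},s_k,\dots,s_l,s_{j+1},\dots,s_{k-1},s_i,\dots,s_j,s_{l+1},\dots,s_{n-1})$ obtained by interchanging the blocks $s_i\cdots s_j$ and $s_k\cdots s_l$ (when $k=j+1$ the middle block is empty), and let $\pi^h=D^{-1}\circ s^h$, so that $(s^h,\pi^h)$ is a plane permutation with the same diagonal $D$. Write $(s^h,\pi^h)=\chi_h\circ(s,\pi)$. *)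

From mathcomp Require Import all_boot all_fingroup.
Set Implicit Arguments. Unset Strict Implicit. Unset Printing Implicit Defensive.

(* The cyclic permutation (s_0 s_1 ... s_{m-1}) given by a duplicate-free
   sequence [sq]: it maps each s_r to s_{r+1} (indices mod m), via [path.next];
   elements not in [sq] are fixed.  If [sq] has duplicates we return 1. *)
Definition seq_cycle (T : finType) (sq : seq T) : {perm T} :=
  match uniq sq as b return uniq sq = b -> {perm T} with
  | true => fun H => perm (can_inj (prev_next H))
  | false => fun _ => 1%g
  end erefl.

Definition block (T : Type) (a b : nat) (sq : seq T) : seq T := drop a (take b sq).

Definition swap_blocks (T : Type) (i j k l : nat) (sq : seq T) : seq T :=
  take i sq ++ block k l.+1 sq ++ block j.+1 k sq ++ block i j.+1 sq ++ drop l.+1 sq.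

(* Composition of maps as in the paper: (sigma \o tau)(x) = sigma (tau x).
   In mathcomp, (tau * sigma) x = sigma (tau x). *)
Definition pcomp (T : finType) (sigma tau : {perm T}) : {perm T} := (tau * sigma)%g.

Definition diagonal (T : finType) (s pi : {perm T}) : {perm T} := pcomp s (pi^-1)%g.

Definition chi_pi (T : finType) (i j k l : nat) (sq : seq T) (pi : {perm T}) : {perm T} :=
  pcomp ((diagonal (seq_cycle sq) pi)^-1)%g (seq_cycle (swap_blocks i j k l sq)).

From mathcomp Require Import all_boot all_fingroup zify.

(* Work with positions: s^h_p = s_(g p) for the position map g = swap_index.
   As pi^h = pi o s^-1 o s^h, pi^h sends s_(g p) to pi (s_(g (p+1) - 1)),
   indices mod n.  Since g is the identity outside [i, l] and a translation on
   each block, g (p+1) - 1 = g p except where p + 1 crosses a block boundary,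
   which happens exactly at the four positions of the statement (three when
   the middle block is empty). *)

Definition cyc_succ (n p : nat) : nat := if p.+1 < n then p.+1 else 0.

Definition cyc_pred (n q : nat) : nat := if 0 < q then q.-1 else n.-1.

Section CyclicNeighbours.
Variables (T : eqType) (x0 : T).

Lemma next_nth_cyc (t : seq T) p : uniq t -> p < size t ->
  next t (nth x0 t p) = nth x0 t (cyc_succ (size t) p).
Proof.
move=> t_uniq p_lt; rewrite next_nth mem_nth // index_uniq //.
case: t t_uniq p_lt => [|y t] //= _ p_lt; rewrite /cyc_succ /=.
case: ifP => [p1_lt | p1_ge]; first exact: set_nth_default.
by rewrite nth_default //; lia.
Qed.

Lemma prev_nth_cyc (t : seq T) q : uniq t -> q < size t ->
  prev t (nth x0 t q) = nth x0 t (cyc_pred (size t) q).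
Proof.
move=> t_uniq q_lt.
have pred_lt : cyc_pred (size t) q < size t by rewrite /cyc_pred; case: ifP; lia.
have succ_pred : cyc_succ (size t) (cyc_pred (size t) q) = q.
  by rewrite /cyc_succ /cyc_pred; repeat case: ifP; lia.
by rewrite -{1}succ_pred -next_nth_cyc // prev_next.
Qed.

Lemma prev_next_reindex (t u : seq T) (f : nat -> nat) p :
  uniq t -> uniq u ->
  (forall q, q < size u -> nth x0 u q = nth x0 t (f q)) ->
  (forall q, q < size u -> f q < size t) ->
  p < size u ->
  prev t (next u (nth x0 t (f p))) =
    nth x0 t (cyc_pred (size t) (f (cyc_succ (size u) p))).
Proof.
move=> t_uniq u_uniq u_nth f_lt p_lt.
have succ_lt : cyc_succ (size u) p < size u by rewrite /cyc_succ; case: ifP; lia.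
by rewrite -u_nth // next_nth_cyc // u_nth // prev_nth_cyc // f_lt.
Qed.

End CyclicNeighbours.

Section SwapBlocks.
Variables (T : eqType) (x0 : T).

Lemma size_block a b (s : seq T) : b <= size s -> size (block a b s) = b - a.
Proof. by move=> b_le; rewrite /block size_drop size_takel. Qed.

Lemma nth_block a b (s : seq T) q :
  q < b - a -> nth x0 (block a b s) q = nth x0 s (a + q).
Proof. by move=> q_lt; rewrite /block nth_drop nth_take //; lia. Qed.

Lemma take_block a b (s : seq T) : a <= b -> take b s = take a s ++ block a b s.
Proof. by move=> a_le; rewrite /block -{1}(cat_take_drop a (take b s)) take_takel. Qed.

Lemma perm_swap_blocks i j k l (s : seq T) : i <= j -> j < k -> k <= l ->
  perm_eq (swap_blocks i j k l s) s.
Proof.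
move=> ij jk kl; rewrite -{2}(cat_take_drop l.+1 s) (@take_block k l.+1 s) 1?ltnW //.
rewrite (@take_block j.+1 k s) // (@take_block i j.+1 s) ?leqW // /swap_blocks -!catA.
by rewrite perm_cat2l; apply/seq.permP => a; rewrite !count_cat; lia.
Qed.

End SwapBlocks.

Definition swap_index (i j k l p : nat) : nat :=
  if p < i then p
  else if p < i + (l.+1 - k) then k + (p - i)
  else if p < i + (l.+1 - k) + (k - j.+1) then j.+1 + (p - i - (l.+1 - k))
  else if p < l.+1 then i + (p - (i + (l.+1 - k) + (k - j.+1)))
  else p.

Ltac solve_index :=
  try rewrite /cyc_succ; repeat (case: ifPn => /=);
  rewrite /swap_index /cyc_pred; repeat (case: ifPn => /=); intros; lia.

Lemma nth_swap_blocks (T : eqType) (x0 : T) i j k l (s : seq T) p :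
  i <= j -> j < k -> k <= l -> l < size s ->
  nth x0 (swap_blocks i j k l s) p = nth x0 s (swap_index i j k l p).
Proof.
move=> ij jk kl l_lt; rewrite /swap_blocks nth_cat size_takel; last by lia.
case: ltnP => p1; first by rewrite nth_take // /swap_index p1.
rewrite nth_cat size_block; last by lia.
case: ltnP => p2; first by rewrite nth_block //; congr nth; solve_index.
rewrite nth_cat size_block; last by lia.
case: ltnP => p3; first by rewrite nth_block //; congr nth; solve_index.
rewrite nth_cat size_block; last by lia.
case: ltnP => p4; first by rewrite nth_block //; congr nth; solve_index.
by rewrite nth_drop; congr nth; solve_index.
Qed.

Section ChiPi.
Variable T : finType.

Lemma seq_cycleE (s : seq T) : uniq s -> seq_cycle s =1 next s.
Proof.
move=> s_uniq x; rewrite /seq_cycle.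
by case: {2 3}(uniq s) (erefl (uniq s)) => e; [rewrite permE | rewrite s_uniq in e].
Qed.

Lemma seq_cycleVE (s : seq T) : uniq s -> (seq_cycle s)^-1%g =1 prev s.
Proof. by move=> s_uniq x; rewrite -{1}(next_prev s_uniq x) -seq_cycleE // permK. Qed.

Lemma chi_piE i j k l (s : seq T) pi x :
  uniq s -> uniq (swap_blocks i j k l s) ->
  chi_pi i j k l s pi x = pi (prev s (next (swap_blocks i j k l s) x)).
Proof.
move=> s_uniq sh_uniq; rewrite /chi_pi /diagonal /pcomp permM invMg invgK permM.
by rewrite seq_cycleVE // seq_cycleE.
Qed.

Lemma chi_pi_swap_index i j k l (s : seq T) pi x0 p :
  uniq s -> i <= j -> j < k -> k <= l -> l < size s -> p < size s ->
  chi_pi i j k l s pi (nth x0 s (swap_index i j k l p)) =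
    pi (nth x0 s (cyc_pred (size s)
                    (swap_index i j k l (cyc_succ (size s) p)))).
Proof.
move=> s_uniq ij jk kl l_lt p_lt.
have sh_perm := @perm_swap_blocks _ i j k l s ij jk kl.
have sh_size : size (swap_blocks i j k l s) = size s by rewrite (perm_size sh_perm).
rewrite chi_piE ?(perm_uniq sh_perm) //.
rewrite (@prev_next_reindex _ x0 s _ (swap_index i j k l)) ?sh_size //.
- by rewrite (perm_uniq sh_perm).
- by move=> q _; rewrite nth_swap_blocks.
- by move=> q q_lt; solve_index.
Qed.

End ChiPi.

Theorem lemma1 (n : nat) (sq : seq 'I_n) (pi : {perm 'I_n}) (i j k l : nat) (x0 : 'I_n) :
  uniq sq -> size sq = n ->
  1 <= i -> i <= j -> j < k -> k <= l -> l <= n - 1 ->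
  let s_ := fun r => nth x0 sq r in
  let pih := chi_pi i j k l sq pi in
  (forall r, r < n -> r \notin [:: i.-1; j; k.-1; l] -> pih (s_ r) = pi (s_ r)) /\
  (j.+1 < k ->
     [/\ pih (s_ i.-1) = pi (s_ k.-1), pih (s_ j) = pi (s_ l),
         pih (s_ k.-1) = pi (s_ i.-1) & pih (s_ l) = pi (s_ j)]) /\
  (j = k.-1 ->
     [/\ pih (s_ i.-1) = pi (s_ j), pih (s_ j) = pi (s_ l) & pih (s_ l) = pi (s_ i.-1)]).
Proof.
move=> sq_uniq sq_size i_ge1 ij jk kl l_le s_ pih.
have chi_at p r t : p < n -> swap_index i j k l p = r ->
    cyc_pred n (swap_index i j k l (cyc_succ n p)) = t -> pih (s_ r) = pi (s_ t).
  by move=> p_lt <- <-; rewrite /pih /s_ chi_pi_swap_index ?sq_size //; lia.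
split; [|split].
- move=> r r_lt; rewrite !inE !negb_or => /and4P[/eqP ? /eqP ? /eqP ? /eqP ?].
  case: (ltnP r i) => ?; first by apply: (chi_at r); solve_index.
  case: (ltnP r j) => ?; first by apply: (chi_at (r + l - j)); solve_index.
  case: (ltnP r k) => ?; first by apply: (chi_at (r + i + l - k - j)); solve_index.
  case: (ltnP r l) => ?; first by apply: (chi_at (i + r - k)); solve_index.
  by apply: (chi_at r); solve_index.
- by move=> ?; split; [apply: (chi_at i.-1) | apply: (chi_at l)
    | apply: (chi_at (i + l - j - 1)) | apply: (chi_at (i + l - k))]; solve_index.
- by move=> ?; split; [apply: (chi_at i.-1) | apply: (chi_at l)
    | apply: (chi_at (i + l - k))]; solve_index.
Qed.
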